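(* Let $n\ge3$. For real coefficients $c^{lm}_{ij}$ ($1\le i,j,l,m\le n$) with $c^{lm}_{ij}=c^{lm}_{ji}$, consider the homogeneous linear system in the $n^2$ unknowns $b^k_s$ ($1\le k,s\le n$) consisting of the equations $$(c^{lk}_{ij}-c^{li}_{kj})b^k_p+(c^{lp}_{kj}-c^{lk}_{pj})b^k_i+(c^{ki}_{pj}-c^{kp}_{ij})b^l_k+(c^{lp}_{ik}-c^{li}_{pk})b^k_j=0$$ for all $1\le i<p\le n$ and all $1\le j,l\le n$ (summation over the repeated index $k$ from $1$ to $n$). Then there exists a choice of such coefficients $c^{lm}_{ij}$, satisfying in addition that $c^{lp}_{ij}\neq0$ only if the set $\{i,j,l,p\}$ consists of exactly two distinct numbers, for which this system has an $n^2\times n^2$ nondegenerate minor; in particular, for this choice its only solution is $b^k_s=0$ for all $k,s$.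
   Context: This system is the compatibility condition $\partial_p(\mathcal{L}_{V_1}\Gamma_1)^l_{ij}=\partial_i(\mathcal{L}_{V_1}\Gamma_1)^l_{pj}$ for a linear vector field $V_1^k=\sum_s b^k_sx^s$ and a connection with Christoffel symbols $\Gamma^l_{ij}=\sum_m c^{lm}_{ij}x^m$, but the claim is purely about the stated linear system. *)

From HB Require Import structures.
From mathcomp Require Import all_boot all_order all_algebra.
From mathcomp Require Import reals.
Set Implicit Arguments. Unset Strict Implicit. Unset Printing Implicit Defensive.
Import Order.TTheory GRing.Theory Num.Theory.
Local Open Scope ring_scope.

(* Coefficients: [c l m i j] stands for c^{lm}_{ij}.
   Unknowns: [B : 'M[R]_n], with [B k s] standing for b^k_s. *)

Definition lie_eqn {R : realType} {n : nat}
    (c : 'I_n -> 'I_n -> 'I_n -> 'I_n -> R) (i p j l : 'I_n) (B : 'M[R]_n) : R :=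
  \sum_(k < n)
    ( (c l k i j - c l i k j) * B k p
    + (c l p k j - c l k p j) * B k i
    + (c k i p j - c k p i j) * B l k
    + (c l p i k - c l i p k) * B k j ).

(* The coefficient of the unknown number q (unknowns b^k_s enumerated as the
   entries of the n x n matrix via mxvec) in the equation (i,p,j,l). *)
Definition lie_coef {R : realType} {n : nat}
    (c : 'I_n -> 'I_n -> 'I_n -> 'I_n -> R) (i p j l : 'I_n) (q : 'I_(n * n)) : R :=
  lie_eqn c i p j l (vec_mx (delta_mx 0 q)).

From HB Require Import structures.
From mathcomp Require Import all_boot all_order all_algebra.
From mathcomp Require Import reals.
From mathcomp Require Import ring lra.
Import Order.TTheory GRing.Theory Num.Theory.
Local Open Scope ring_scope.

(* Take c^{lm}_{ij} = 1 when l = i = j <> m and 0 otherwise.  Then single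
   equations isolate the unknowns: for a <> b the equation (a,b,b,a) reads
   2 b^a_b = 0, the equation (a,b,a,b) reads -2 b^b_a = 0, and (a,b,a,a) reads
   sum_{k <> a} b^k_b + b^a_a = 0, that is b^b_b + b^a_a = 0 once the
   off-diagonal unknowns vanish.  Choosing one such equation per unknown b^k_s,
   with (0,k,0,0) for b^k_k (k <> 0) and (1,2,1,1) for b^0_0, gives n^2
   equations with only the trivial common solution: b^0_0 + b^1_1,
   b^0_0 + b^2_2 and b^1_1 + b^2_2 all vanish, which forces b^0_0 = 0 (this is
   where n >= 3 is needed).  A square system with trivial kernel has a
   nonzero determinant. *)

Section LieSystem.
Variables (R : realType) (n : nat) (c : 'I_n -> 'I_n -> 'I_n -> 'I_n -> R).

Section OneEquation.
Variables (i p j l : 'I_n).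

Fact lie_eqn_is_scalar : scalar (lie_eqn c i p j l).
Proof.
move=> a B1 B2; rewrite /lie_eqn mulr_sumr -big_split.
by apply: eq_bigr => k _; rewrite !mxE /=; ring.
Qed.

HB.instance Definition _ :=
  GRing.isLinear.Build R 'M[R]_n R *%R (lie_eqn c i p j l) lie_eqn_is_scalar.

Lemma lie_eqn_vec_mx (v : 'rV[R]_(n * n)) :
  lie_eqn c i p j l (vec_mx v) = \sum_q v 0 q * lie_coef c i p j l q.
Proof.
rewrite {1}(matrix_sum_delta v) big_ord1 !linear_sum.
by apply: eq_bigr => q _; rewrite !linearZ.
Qed.

End OneEquation.

Lemma lie_minor_det_neq0 (ri rp rj rl : 'I_(n * n) -> 'I_n) :
  (forall B : 'M[R]_n,
     (forall a, lie_eqn c (ri a) (rp a) (rj a) (rl a) B = 0) -> B = 0) ->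
  \det (\matrix_(a < n * n, q < n * n) lie_coef c (ri a) (rp a) (rj a) (rl a) q)
    != 0.
Proof.
move=> eqns_trivial; apply/negP; rewrite -det_tr => /det0P[v nz_v vM0].
suff vec_v0 : vec_mx v = 0 by rewrite -(vec_mxK v) vec_v0 linear0 eqxx in nz_v.
apply: eqns_trivial => a; rewrite lie_eqn_vec_mx.
have /rowP/(_ a) := vM0; rewrite !mxE => vM0a.
by rewrite -[X in _ = X]vM0a; apply: eq_bigr => q _; rewrite !mxE.
Qed.

End LieSystem.

Definition mxvec_unindex {m n} (a : 'I_(m * n)) : 'I_m * 'I_n :=
  enum_val (cast_ord (esym (mxvec_cast m n)) a).

Lemma mxvec_indexK m n (i : 'I_m) (j : 'I_n) :
  mxvec_unindex (mxvec_index i j) = (i, j).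
Proof. by rewrite /mxvec_unindex /mxvec_index cast_ordK enum_rankK. Qed.

Ltac rewrite_neq := repeat match goal with
  | H : is_true (?x != ?y) |- context [?x == ?y] => rewrite (negbTE H)
  | H : is_true (?x != ?y) |- context [?y == ?x] => rewrite [y == x]eq_sym (negbTE H)
  end.

Section Witness.
Context {R : realType} {n : nat}.
Implicit Types (B : 'M[R]_n).

Definition witness_coef (l m i j : 'I_n) : R :=
  ((l == i) && (l == j) && (m != l))%:R.

Lemma witness_coefC l m i j : witness_coef l m i j = witness_coef l m j i.
Proof. by rewrite /witness_coef (andbC (l == i)). Qed.

Lemma witness_coef_support l p i j :
  witness_coef l p i j != 0 -> #|[set i; j; l; p]| = 2%N.
Proof.
rewrite pnatr_eq0 eqb0 negbK => /andP[/andP[/eqP <- /eqP <-] pl].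
have -> : [set l; l; l; p] = [set l; p].
  by apply/setP => x; rewrite !inE; case: (x == l).
by rewrite cards2 eq_sym pl.
Qed.

Lemma lie_eqn_witness_upper a b B :
  a != b -> lie_eqn witness_coef a b b a B = 2 * B a b.
Proof.
move=> ab; rewrite /lie_eqn (bigD1 a) // (bigD1 b) 1?eq_sym //=.
by rewrite big1 => [|k /andP[kb ka]]; rewrite /witness_coef !eqxx;
  rewrite_neq => /=; ring.
Qed.

Lemma lie_eqn_witness_lower a b B :
  a != b -> lie_eqn witness_coef a b a b B = - (2 * B b a).
Proof.
move=> ab; rewrite /lie_eqn (bigD1 a) // (bigD1 b) 1?eq_sym //=.
by rewrite big1 => [|k /andP[kb ka]]; rewrite /witness_coef !eqxx;
  rewrite_neq => /=; ring.
Qed.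

Lemma lie_eqn_witness_diag a b B :
  a != b -> lie_eqn witness_coef a b a a B = \sum_(k | k != a) B k b + B a a.
Proof.
move=> ab; rewrite /lie_eqn (bigD1 a) //= addrC /witness_coef; congr (_ + _).
  by apply: eq_bigr => k ka; rewrite !eqxx; rewrite_neq; rewrite /= andbF /=; ring.
by rewrite !eqxx; rewrite_neq => /=; ring.
Qed.

End Witness.

Section Pivots.
Context {m : nat}.
Local Notation N := m.+3.
Local Notation i1 := (inord 1 : 'I_N).
Local Notation i2 := (inord 2 : 'I_N).

Definition pivot_i (k s : 'I_N) : 'I_N :=
  if k == s then (if k == ord0 then i1 else ord0) else if (k < s)%N then k else s.
Definition pivot_p (k s : 'I_N) : 'I_N :=
  if k == s then (if k == ord0 then i2 else k) else if (k < s)%N then s else k.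
Definition pivot_j (k s : 'I_N) : 'I_N := if k == s then pivot_i k s else s.
Definition pivot_l (k s : 'I_N) : 'I_N := if k == s then pivot_i k s else k.

Lemma pivot_i_lt_p k s : (pivot_i k s < pivot_p k s)%N.
Proof.
rewrite /pivot_i /pivot_p; have [_|ks] := eqVneq k s.
  have [_|] := eqVneq k ord0; first by rewrite !inordK.
  by rewrite -val_eqE lt0n.
by case: (ltnP k s) => // sk; rewrite ltn_neqAle sk andbT eq_sym.
Qed.

Lemma witness_pivot_eqns_trivial (R : realType) (B : 'M[R]_N) :
  (forall k s, lie_eqn witness_coef
     (pivot_i k s) (pivot_p k s) (pivot_j k s) (pivot_l k s) B = 0) ->
  B = 0.
Proof.
move=> eqn0.
have offdiag k s : k != s -> B k s = 0.
  move=> ks; have := eqn0 k s.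
  rewrite /pivot_j /pivot_l /pivot_i /pivot_p (negbTE ks); case: ltnP => _.
    by rewrite lie_eqn_witness_upper // => /eqP; rewrite mulf_eq0 pnatr_eq0 => /eqP.
  rewrite lie_eqn_witness_lower 1?eq_sym // => /eqP.
  by rewrite oppr_eq0 mulf_eq0 pnatr_eq0 => /eqP.
have diag a b : a != b -> lie_eqn witness_coef a b a a B = B b b + B a a.
  move=> ab; rewrite lie_eqn_witness_diag // (bigD1 b) 1?eq_sym //= big1 ?addr0 //.
  by move=> k /andP[_ kb]; apply: offdiag.
have [i10 i20 i21] : [/\ i1 != ord0, i2 != ord0 & i2 != i1].
  by rewrite -!val_eqE /= !inordK.
have sum0 k : k != ord0 -> B k k + B ord0 ord0 = 0.
  move=> k0; have := eqn0 k k.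
  by rewrite /pivot_j /pivot_l /pivot_i /pivot_p eqxx (negbTE k0) diag 1?eq_sym.
have sum12 : B i2 i2 + B i1 i1 = 0.
  have := eqn0 ord0 ord0.
  by rewrite /pivot_j /pivot_l /pivot_i /pivot_p !eqxx diag 1?eq_sym.
have B00 : B ord0 ord0 = 0 by move: (sum0 _ i10) (sum0 _ i20) sum12; lra.
apply/matrixP => k s; rewrite mxE.
have [<-|ks] := eqVneq k s; last exact: offdiag.
have [->//|k0] := eqVneq k ord0.
by have := sum0 k k0; rewrite B00 addr0.
Qed.

End Pivots.

Theorem mainTheorem3 (R : realType) (n : nat) (hn : (3 <= n)%N) :
  exists c : 'I_n -> 'I_n -> 'I_n -> 'I_n -> R,
    (forall l m i j, c l m i j = c l m j i) /\
    (forall l p i j, c l p i j != 0 -> #|[set i; j; l; p]| = 2%N) /\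
    (exists ri rp rj rl : 'I_(n * n) -> 'I_n,
        (forall a, (ri a < rp a)%N) /\
        \det (\matrix_(a < n * n, q < n * n) lie_coef c (ri a) (rp a) (rj a) (rl a) q)
          != 0) /\
    (forall B : 'M[R]_n,
        (forall i p j l : 'I_n, (i < p)%N -> lie_eqn c i p j l B = 0) -> B = 0).
Proof.
case: n hn => [|[|[|m]]] // _.
exists witness_coef; split; first exact: witness_coefC.
split; first exact: witness_coef_support.
split; last first.
  move=> B eqn0; apply: witness_pivot_eqns_trivial => k s.
  exact/eqn0/pivot_i_lt_p.
pose k a := (@mxvec_unindex m.+3 m.+3 a).1.
pose s a := (@mxvec_unindex m.+3 m.+3 a).2.
exists (fun a => pivot_i (k a) (s a)), (fun a => pivot_p (k a) (s a)),
  (fun a => pivot_j (k a) (s a)), (fun a => pivot_l (k a) (s a)).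
split => [a|]; first exact: pivot_i_lt_p.
apply: lie_minor_det_neq0 => B eqn0; apply: witness_pivot_eqns_trivial => k0 s0.
by have := eqn0 (mxvec_index k0 s0); rewrite /k /s mxvec_indexK.
Qed.
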